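(* Let $\mathbf A$ be a finite Cornish algebra of type $F$ and let $\mathbb X=D(\mathbf A)$. Then the following are equivalent: (1) $\mathbf A$ is semi-primal; (2) for each Cornish space $\mathbb Y$ of type $F$ and jointly surjective morphisms $\phi_1,\phi_2\colon\mathbb X\to\mathbb Y$, either $\mathbb Y=\mathbb Y_1\,\dot\cup\,\mathbb Y_2$ where $\mathbb Y_i:=\phi_i(\mathbb X)$, or $\phi_1=\phi_2$; (3) $\mathbb X$ has no non-empty proper substructures and, for each Cornish space $\mathbb Y$ of type $F$ and jointly surjective morphisms $\phi_1,\phi_2\colon\mathbb X\to\mathbb Y$, if $\phi_1(a)$ and $\phi_2(b)$ are comparable for some $a,b\in X$, then there exists $c\in X$ with $\phi_1(c)=\phi_2(c)$.
   Context: $F=F^+\,\dot\cup\,F^-$ is a set of unary operation symbols. A Cornish algebra of type $F$: a bounded distributive lattice with unary operations $f^{\mathbf A}$ ($f\in F$), an endomorphism for $f\in F^+$ and a dual endomorphism for $f\in F^-$. A Cornish space of type $F$: a Priestley space with unary operations $f^{\mathbb X}$ that are continuous order-preserving for $f\in F^+$ and continuous order-reversing for $f\in F^-$; morphisms are continuous order-preserving maps commuting with each $f$. A substructure is a closed subset closed under all $f^{\mathbb X}$. $D(\mathbf A)$: the set of bounded-lattice homomorphisms from the lattice reduct of $\mathbf A$ to $\mathbf 2$, ordered pointwise, topology from $\{0,1\}^A$, with $f^{D(\mathbf A)}(x)=x\circ f^{\mathbf A}$ for $f\in F^+$ and $c\circ x\circ f^{\mathbf A}$ for $f\in F^-$ ($c$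 Boolean complement). $\phi(\mathbb X)$ is the substructure on $\phi(X)$. Jointly surjective: $\phi_1(X)\cup\phi_2(X)=Y$. $\mathbb Y=\mathbb Y_1\,\dot\cup\,\mathbb Y_2$: $Y_1,Y_2$ disjoint, covering $Y$, with no element of $Y_1$ comparable to one of $Y_2$. A finite algebra $\mathbf A$ is semi-primal if it has a majority term and every subalgebra of $\mathbf A^2$ is either a product of two subalgebras of $\mathbf A$ or the graph of the identity map on a subalgebra of $\mathbf A$. *)

From HB Require Import structures.
From mathcomp Require Import all_boot all_order.
From mathcomp Require Import boolp classical_sets topology_structure.
From mathcomp Require Import compact subspace_topology subtype_topology function_spaces bool_topology.

Set Implicit Arguments.
Unset Strict Implicit.
Unset Printing Implicit Defensive.

Local Open Scope classical_set_scope.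

(** * Cornish algebras of type F = F^+ ⊔ F^-.
    The type of operation symbols is [F]; [sgn f = true] means f ∈ F^+,
    [sgn f = false] means f ∈ F^-. *)

Section CornishAlgebra.
Context {d : Order.disp_t} (A : finTBDistrLatticeType d) (F : Type) (sgn : F -> bool).

Definition cornish_alg (fA : F -> A -> A) : Prop :=
  forall f : F,
    if sgn f then
      [/\ forall a b, fA f (Order.meet a b) = Order.meet (fA f a) (fA f b),
          forall a b, fA f (Order.join a b) = Order.join (fA f a) (fA f b),
          fA f Order.top = Order.top & fA f Order.bottom = Order.bottom]
    else
      [/\ forall a b, fA f (Order.meet a b) = Order.join (fA f a) (fA f b),
          forall a b, fA f (Order.join a b) = Order.meet (fA f a) (fA f b),
          fA f Order.top = Order.bottom & fA f Order.bottom = Order.top].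

Inductive term : Type :=
  | tVar of nat
  | tTop
  | tBot
  | tMeet of term & term
  | tJoin of term & term
  | tOp of F & term.

Fixpoint eval_term (fA : F -> A -> A) (env : nat -> A) (t : term) : A :=
  match t with
  | tVar i => env i
  | tTop => Order.top
  | tBot => Order.bottom
  | tMeet t1 t2 => Order.meet (eval_term fA env t1) (eval_term fA env t2)
  | tJoin t1 t2 => Order.join (eval_term fA env t1) (eval_term fA env t2)
  | tOp f t1 => fA f (eval_term fA env t1)
  end.

Definition env3 (a b c : A) : nat -> A :=
  fun i => match i with 0 => a | 1 => b | _ => c end.

Definition has_majority_term (fA : F -> A -> A) : Prop :=
  exists t : term, forall x y : A,
    [/\ eval_term fA (env3 x x y) t = x,
        eval_term fA (env3 x y x) t = x &
        eval_term fA (env3 y x x) t = x].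

Definition is_subalg (fA : F -> A -> A) (B : {set A}) : Prop :=
  [/\ Order.top \in B, Order.bottom \in B,
      forall a b, a \in B -> b \in B -> Order.meet a b \in B,
      forall a b, a \in B -> b \in B -> Order.join a b \in B &
      forall f a, a \in B -> fA f a \in B].

Definition is_subalg2 (fA : F -> A -> A) (S : {set A * A}) : Prop :=
  [/\ (Order.top, Order.top) \in S, (Order.bottom, Order.bottom) \in S,
      forall p q, p \in S -> q \in S ->
        (Order.meet p.1 q.1, Order.meet p.2 q.2) \in S,
      forall p q, p \in S -> q \in S ->
        (Order.join p.1 q.1, Order.join p.2 q.2) \in S &
      forall f p, p \in S -> (fA f p.1, fA f p.2) \in S].

Definition semi_primal (fA : F -> A -> A) : Prop :=
  has_majority_term fA /\
  forall S : {set A * A}, is_subalg2 fA S ->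
    (exists B C : {set A}, [/\ is_subalg fA B, is_subalg fA C & S = finset.setX B C])
    \/ (exists B : {set A}, is_subalg fA B /\ S = [set (b, b) | b in B]%SET).

(** Bounded-lattice homomorphisms A -> 2, as points of {0,1}^A (product
    topology, {0,1} discrete). *)
Definition is_lat_hom (x : A -> bool) : Prop :=
  [/\ x Order.top = true, x Order.bottom = false,
      forall a b, x (Order.meet a b) = x a && x b &
      forall a b, x (Order.join a b) = x a || x b].

Definition D_set : set {ptws A -> bool} := [set x | is_lat_hom x].

Definition D_space : topologicalType := set_type D_set.

Definition D_le (x y : D_space) : Prop :=
  forall a : A, proj1_sig x a -> proj1_sig y a.

Definition D_op_fun (fA : F -> A -> A) (f : F) (x : A -> bool) : A -> bool :=
  if sgn f then (fun a => x (fA f a)) else (fun a => ~~ x (fA f a)).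

Lemma D_op_hom (fA : F -> A -> A) (HA : cornish_alg fA) (f : F) (x : A -> bool) :
  is_lat_hom x -> is_lat_hom (D_op_fun fA f x).
Proof.
move=> [xT xB xM xJ]; rewrite /D_op_fun; have := HA f.
case: (sgn f) => -[fM fJ fT fB]; split.
- by rewrite fT.
- by rewrite fB.
- by move=> a b; rewrite fM xM.
- by move=> a b; rewrite fJ xJ.
- by rewrite fT xB.
- by rewrite fB xT.
- by move=> a b; rewrite fM xJ negb_or.
- by move=> a b; rewrite fJ xM negb_and.
Qed.

Definition D_op (fA : F -> A -> A) (HA : cornish_alg fA) (f : F) (x : D_space)
  : D_space :=
  @exist _ (fun y => y \in D_set) (D_op_fun fA f (proj1_sig x))
    (mem_set (D_op_hom HA f (set_mem (proj2_sig x)))).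

End CornishAlgebra.

Section CornishSpace.
Context (F : Type) (sgn : F -> bool).

Definition partial_order {Y : Type} (le : Y -> Y -> Prop) : Prop :=
  [/\ forall x, le x x,
      forall x y z, le x y -> le y z -> le x z &
      forall x y, le x y -> le y x -> x = y].

Definition up_set {Y : Type} (le : Y -> Y -> Prop) (U : set Y) : Prop :=
  forall u v, U u -> le u v -> U v.

Definition priestley_space (Y : topologicalType) (le : Y -> Y -> Prop) : Prop :=
  [/\ partial_order le, compact [set: Y] &
      forall x y, ~ le x y ->
        exists U : set Y, [/\ open U, closed U, up_set le U, U x & ~ U y]].

Definition cornish_space (Y : topologicalType) (le : Y -> Y -> Prop)
  (fY : F -> Y -> Y) : Prop :=
  priestley_space le /\
  forall f : F, continuous (fY f) /\
    (if sgn f then forall u v, le u v -> le (fY f u) (fY f v)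
     else forall u v, le u v -> le (fY f v) (fY f u)).

Definition cornish_morphism (X Y : topologicalType)
  (leX : X -> X -> Prop) (fX : F -> X -> X)
  (leY : Y -> Y -> Prop) (fY : F -> Y -> Y) (phi : X -> Y) : Prop :=
  [/\ continuous phi,
      forall u v, leX u v -> leY (phi u) (phi v) &
      forall f u, phi (fX f u) = fY f (phi u)].

Definition substructure (X : topologicalType) (fX : F -> X -> X) (S : set X) : Prop :=
  closed S /\ forall f x, S x -> S (fX f x).

Definition jointly_surjective {X Y : Type} (phi1 phi2 : X -> Y) : Prop :=
  phi1 @` setT `|` phi2 @` setT = setT.

Definition order_disjoint_union {Y : Type} (le : Y -> Y -> Prop)
  (Y1 Y2 : set Y) : Prop :=
  [/\ Y1 `&` Y2 = set0, Y1 `|` Y2 = setT &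
      forall y1 y2, Y1 y1 -> Y2 y2 -> ~ le y1 y2 /\ ~ le y2 y1].

Definition order_comparable {Y : Type} (le : Y -> Y -> Prop) (u v : Y) : Prop :=
  le u v \/ le v u.

End CornishSpace.

(* A finite distributive lattice is the lattice of up-sets of its dual, and
   likewise a {0,1}-sublattice S of A^2 is the lattice of up-sets of the
   restricted points x o pi_i on S.  For (1) => (2), the pairs (a, b) such
   that some clopen up-set of Y pulls back to a along phi1 and to b along phi2
   form a subalgebra of A^2: if it contains (1, 0) and (0, 1) these up-sets
   separate the two images, and if it is diagonal no clopen up-set separates
   phi1 x from phi2 x, so phi1 = phi2 by the Priestley separation axiom.  For
   (2) => (1), a subalgebra S of A^2 gives a finite Cornish space of
   restricted points with two jointly surjective morphisms; phi1 = phi2 makes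
   S diagonal, and an order-disjoint union makes the image of phi1 an up-set
   represented by (1, 0) (and symmetrically (0, 1)), which makes S a product.
   The majority term is the lattice median.  For (3), the pairs agreeing on a
   substructure form a subalgebra, which rules out proper substructures, and
   conversely the equalizer of two morphisms is a substructure. *)

From HB Require Import structures.
From mathcomp Require Import all_boot all_order.
From mathcomp Require Import boolp classical_sets topology_structure.
From mathcomp Require Import compact subspace_topology subtype_topology function_spaces bool_topology.
From mathcomp Require Import discrete_topology cardinality.
Import Order.TTheory.

Section LatticeHomomorphisms.
Context {d : Order.disp_t} (A : finTBDistrLatticeType d).
Local Open Scope order_scope.

Lemma principal_lat_hom (j : A) : ~~ (j <= \bot) ->
  (forall u v, j <= u `|` v -> (j <= u) || (j <= v)) ->
  is_lat_hom (fun c => j <= c).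
Proof.
move=> nj0 j_prime; split.
- exact: lex1.
- exact: negbTE.
- by move=> u v; rewrite lexI.
- move=> u v; apply/idP/idP; first exact: j_prime.
  by case/orP=> ?; [apply: lexUl | apply: lexUr].
Qed.

Lemma lat_hom_separation (a b : A) : ~~ (a <= b) ->
  exists2 x : A -> bool, is_lat_hom x & x a && ~~ x b.
Proof.
move=> nab.
pose below c := #|[pred e : A | e < c]|.
have below_lt c j : c < j -> (below c < below j)%N.
  move=> cj; apply: proper_card; apply/properP; split.
    by apply/fintype.subsetP => e; rewrite !inE => ec; exact: lt_trans ec cj.
  by exists c; rewrite !inE ?ltxx.
pose P := [pred c : A | (c <= a) && ~~ (c <= b)].
have Pa : P a by rewrite /P /= lexx.
case: (arg_minnP below Pa) => j /andP[ja njb] j_min.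
have below_b c : c < j -> c <= b.
  move=> cj; apply: contraT => ncb.
  have := j_min c; rewrite /P /= ncb (le_trans (ltW cj) ja) => /(_ isT).
  by rewrite leqNgt below_lt.
exists (fun c => j <= c); last by rewrite ja.
apply: principal_lat_hom => [|u v juv].
  by apply: contra njb => j0; exact: le_trans j0 (le0x b).
apply: contraT; rewrite negb_or => /andP[nju njv].
have meet_lt w : ~~ (j <= w) -> j `&` w < j.
  move=> njw; rewrite lt_neqAle leIl andbT.
  by apply: contraNneq njw => <-; exact: leIr.
move: njb; suff -> : j = (j `&` u) `|` (j `&` v) by rewrite leUx !below_b ?meet_lt.
by rewrite -meetUr; apply/esym/meet_idPl.
Qed.

End LatticeHomomorphisms.

Section RestrictedHomomorphisms.
Variables (T : finType) (meet join : T -> T -> T) (top bot : T) (S : pred T).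
Hypotheses (S_top : S top) (S_bot : S bot)
  (S_meet : forall s t, S s -> S t -> S (meet s t))
  (S_join : forall s t, S s -> S t -> S (join s t)).

Definition hom_on (g : T -> bool) : Prop :=
  [/\ g top, ~~ g bot, forall s t, S s -> S t -> g (meet s t) = g s && g t &
      forall s t, S s -> S t -> g (join s t) = g s || g t].

Lemma hom_on_foldr_meet (l : seq T) : all S l ->
  S (foldr meet top l) /\ forall g, hom_on g -> g (foldr meet top l) = all g l.
Proof.
elim: l => [|s l IH] /=; first by split => // g [].
move=> /andP[Ss /IH[Sl gl]]; split; first exact: S_meet.
by move=> g hg; case: (hg) => _ _ g_meet _; rewrite g_meet // gl.
Qed.

Lemma hom_on_foldr_join (l : seq T) : all S l ->
  S (foldr join bot l) /\ forall g, hom_on g -> g (foldr join bot l) = has g l.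
Proof.
elim: l => [|s l IH] /=; first by split => // g [_ /negbTE].
move=> /andP[Ss /IH[Sl gl]]; split; first exact: S_join.
by move=> g hg; case: (hg) => _ _ _ g_join; rewrite g_join // gl.
Qed.

(* The element representing the up-set [W] is the join, over [i] in [W], of
   the meet of the elements of [S] on which [h i] holds. *)
Lemma hom_on_up_set_represented (I : Type) (h : I -> T -> bool) (W : set I) :
  (forall i, hom_on (h i)) ->
  (forall i j, W i -> (forall s, S s -> h i s -> h j s) -> W j) ->
  exists2 s, S s & forall i, h i s <-> W i.
Proof.
move=> h_hom W_up.
pose support g := [seq s <- enum T | S s && g s].
have support_S g : all S (support g).
  by apply/allP => s; rewrite mem_filter => /andP[/andP[]].
pose l := [seq u <- enum T | `[< exists2 i, W i & u = foldr meet top (support (h i)) >]].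
have l_S : all S l.
  apply/allP => u; rewrite mem_filter => /andP[/asboolP[i _ ->] _].
  by case: (hom_on_foldr_meet _ (support_S (h i))).
have [join_S join_l] := hom_on_foldr_join _ l_S.
exists (foldr join bot l) => // i; rewrite join_l //; split.
- case/hasP=> u; rewrite mem_filter => /andP[/asboolP[j Wj ->] _].
  case: (hom_on_foldr_meet _ (support_S (h j))) => _ -> // /allP hij.
  by apply: W_up Wj _ => s Ss hjs; apply: hij; rewrite mem_filter Ss hjs mem_enum.
- move=> Wi; apply/hasP; exists (foldr meet top (support (h i))).
    by rewrite mem_filter mem_enum andbT; apply/asboolP; exists i.
  case: (hom_on_foldr_meet _ (support_S (h i))) => _ -> //.
  by apply/allP => s; rewrite mem_filter => /andP[/andP[]].
Qed.

End RestrictedHomomorphisms.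
Arguments hom_on {T}.

Local Open Scope classical_set_scope.

Lemma incomparable_order_disjoint_union {X Y : Type} (le : Y -> Y -> Prop)
    (phi1 phi2 : X -> Y) :
  (forall y, le y y) -> jointly_surjective phi1 phi2 ->
  ~ (exists a b, order_comparable le (phi1 a) (phi2 b)) ->
  order_disjoint_union le (phi1 @` setT) (phi2 @` setT).
Proof.
move=> le_refl js nab; split=> //.
  apply/seteqP; split=> // y [[a _ ea] [b _ eb]]; apply: nab.
  by exists a, b; left; rewrite ea eb.
by move=> _ _ [a _ <-] [b _ <-]; split=> le_ab; apply: nab; exists a, b; [left | right].
Qed.

Section DualSpace.
Context {d : Order.disp_t} {A : finTBDistrLatticeType d}.
Local Notation X := (D_space A).

Lemma open_ptws_set1 (c : {ptws A -> bool}) : open [set c].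
Proof.
rewrite openE => g /= ->{g}.
have : \forall h \near c, forall a, h a = c a.
  apply: (@filter_forall _ A (fun a h => h a = c a) (nbhs c) _) => a.
  by apply: (@proj_continuous A (fun _ => bool) a c [set c a]); exact: discrete_set1.
by apply: filterS => h hc; apply: funext.
Qed.

Lemma D_space_open (U : set X) : open U.
Proof.
exists (\bigcup_(x in U) [set sval x]).
  by apply: bigcup_open => x _; exact: open_ptws_set1.
apply/seteqP; split => [y [x Ux /= ex] | y Uy]; last by exists y.
by rewrite (val_inj ex).
Qed.

Lemma D_space_closed (U : set X) : closed U.
Proof. by rewrite -openC; exact: D_space_open. Qed.

Lemma D_space_continuous (Y : topologicalType) (f : X -> Y) : continuous f.
Proof. by apply/continuousP => U _; exact: D_space_open. Qed.

Lemma D_space_lat_hom (x : X) : is_lat_hom (sval x).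
Proof. exact: set_mem (proj2_sig x). Qed.

Definition D_point {y : A -> bool} (hy : is_lat_hom y) : X :=
  exist _ y (mem_set hy).

Lemma D_space_separates (a b : A) : (forall x : X, sval x a = sval x b) -> a = b.
Proof.
have sep u v : (forall x : X, sval x u = sval x v) -> (u <= v)%O.
  move=> uv; apply: contraT => /lat_hom_separation[y hy].
  by have /= -> := uv (D_point hy); rewrite andbN.
by move=> ab; apply/le_anti; rewrite !sep.
Qed.

Lemma D_space_top (a : A) : (forall x : X, sval x a) -> a = Order.top.
Proof. by move=> xa; apply: D_space_separates => x; rewrite xa; case: (D_space_lat_hom x). Qed.

Lemma D_space_bot (a : A) : (forall x : X, ~~ sval x a) -> a = Order.bottom.
Proof.
move=> xa; apply: D_space_separates => x.
by rewrite (negbTE (xa x)); case: (D_space_lat_hom x).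
Qed.

Lemma D_le_anti (u v : X) : D_le u v -> D_le v u -> u = v.
Proof.
move=> uv vu; apply: val_inj; apply: funext => a.
by apply/idP/idP; [exact: uv | exact: vu].
Qed.

Lemma D_up_set_represented (W : set X) : (forall u v, W u -> D_le u v -> W v) ->
  exists a, forall x : X, sval x a <-> W x.
Proof.
move=> W_up.
have [||a _ aW] := @hom_on_up_set_represented A Order.meet Order.join
  Order.top Order.bottom predT isT isT (fun _ _ _ _ => isT) (fun _ _ _ _ => isT)
  X (fun x => sval x) W.
- by move=> x; case: (D_space_lat_hom x) => xT xB xM xJ; split; rewrite ?xB.
- by move=> x y Wx xy; apply: W_up Wx _ => a; exact: xy.
by exists a.
Qed.

End DualSpace.

Section SemiPrimality.
Context {d : Order.disp_t} (A : finTBDistrLatticeType d) (F : Type) (fA : F -> A -> A).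

Lemma median_majority_term : has_majority_term fA.
Proof.
exists (tJoin (tJoin (tMeet (tVar _ 0) (tVar _ 1)) (tMeet (tVar _ 1) (tVar _ 2)))
          (tMeet (tVar _ 0) (tVar _ 2))) => x y /=.
split; rewrite ?meetxx; apply: le_anti; rewrite !leUx ?leIl ?leIr ?lexx ?andbT //=.
- by apply: lexUl; apply: lexUl.
- exact: lexUr.
- by apply: lexUl; apply: lexUr.
Qed.

Definition prod_or_diag (S : {set A * A}) : Prop :=
  ((Order.top, Order.bottom) \in S /\ (Order.bottom, Order.top) \in S) \/
  {in S, forall p : A * A, p.1 = p.2}.

Lemma is_subalg_proj (b : bool) {S : {set A * A}} : is_subalg2 fA S ->
  is_subalg fA [set (if b then p.1 else p.2) | p in S]%SET.
Proof.
case=> S_top S_bot S_meet S_join S_op; split.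
- by apply/imsetP; exists (Order.top, Order.top) => //; case: b.
- by apply/imsetP; exists (Order.bottom, Order.bottom) => //; case: b.
- move=> _ _ /imsetP[p Sp ->] /imsetP[q Sq ->]; apply/imsetP.
  by exists (Order.meet p.1 q.1, Order.meet p.2 q.2); [exact: S_meet | case: b].
- move=> _ _ /imsetP[p Sp ->] /imsetP[q Sq ->]; apply/imsetP.
  by exists (Order.join p.1 q.1, Order.join p.2 q.2); [exact: S_join | case: b].
- move=> f _ /imsetP[p Sp ->]; apply/imsetP.
  by exists (fA f p.1, fA f p.2); [exact: S_op | case: b].
Qed.

(* [(a, c) = ((a, c1) /\ (1, 0)) \/ ((a2, c) /\ (0, 1))]. *)
Lemma subalg2_corners_prod (S : {set A * A}) : is_subalg2 fA S ->
  (Order.top, Order.bottom) \in S -> (Order.bottom, Order.top) \in S ->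
  S = finset.setX [set p.1 | p in S]%SET [set p.2 | p in S]%SET.
Proof.
case=> _ _ S_meet S_join _ S10 S01; apply/setP => -[a c]; rewrite inE /=.
apply/idP/andP => [Sac | [/imsetP[[a' c1] Sac1 /= ->] /imsetP[[a2 c'] Sa2c /= ->]]].
  by split; apply/imsetP; [exists (a, c) | exists (a, c)].
have := S_join _ _ (S_meet _ _ Sac1 S10) (S_meet _ _ Sa2c S01).
by rewrite /= !meetx1 !meetx0 joinx0 join0x.
Qed.

Lemma semi_primalP : semi_primal fA <->
  forall S : {set A * A}, is_subalg2 fA S -> prod_or_diag S.
Proof.
split=> [[_ sp] S HS | pod]; last first.
  split=> [|S HS]; first exact: median_majority_term.
  case: (pod S HS) => [[S10 S01] | diag]; [left | right].
    exists [set p.1 | p in S]%SET, [set p.2 | p in S]%SET.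
    by split; [exact: (is_subalg_proj true HS) | exact: (is_subalg_proj false HS) |
               exact: subalg2_corners_prod].
  exists [set p.1 | p in S]%SET; split; first exact: (is_subalg_proj true HS).
  apply/setP => -[a c]; apply/idP/imsetP => [Sac | [_ /imsetP[[a' c'] Sac' ->] [-> ->]]].
    have /= ac := diag _ Sac.
    by exists a; [apply/imsetP; exists (a, c) | rewrite ac].
  by have /= ac' := diag _ Sac'; rewrite /= {2}ac'.
case: (sp S HS) => [[B [C [[B1 B0 _ _ _] [C1 C0 _ _ _] ->]]] | [B [_ ->]]].
  by left; rewrite !inE /= B1 B0 C1 C0.
by right=> _ /imsetP[b _ ->].
Qed.

End SemiPrimality.

Section CornishDuality.
Context {d : Order.disp_t} {A : finTBDistrLatticeType d} {F : Type} {sgn : F -> bool}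
  {fA : F -> A -> A} (HA : cornish_alg sgn fA).
Local Notation X := (D_space A).
Local Notation leX := (@D_le d A).
Local Notation fX := (D_op HA).

Lemma D_opE f (x : X) a :
  sval (fX f x) a = if sgn f then sval x (fA f a) else ~~ sval x (fA f a).
Proof. by rewrite /= /D_op_fun; case: (sgn f). Qed.

Definition agree_on (S : set X) : {set A * A} :=
  [set p | `[< forall x, S x -> sval x p.1 = sval x p.2 >]]%SET.

Lemma agree_onP (S : set X) p :
  reflect (forall x, S x -> sval x p.1 = sval x p.2) (p \in agree_on S).
Proof. by rewrite inE; apply: asboolP. Qed.

Lemma agree_on_subalg2 {S : set X} : (forall f x, S x -> S (fX f x)) ->
  is_subalg2 fA (agree_on S).
Proof.
move=> S_op; split.
- by apply/agree_onP.
- by apply/agree_onP.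
- move=> p q /agree_onP hp /agree_onP hq; apply/agree_onP => x Sx /=.
  by case: (D_space_lat_hom x) => _ _ xM _; rewrite !xM (hp x Sx) (hq x Sx).
- move=> p q /agree_onP hp /agree_onP hq; apply/agree_onP => x Sx /=.
  by case: (D_space_lat_hom x) => _ _ _ xJ; rewrite !xJ (hp x Sx) (hq x Sx).
- move=> f p /agree_onP hp; apply/agree_onP => x Sx /=.
  by have := hp _ (S_op f x Sx); rewrite !D_opE; case: (sgn f) => // /negb_inj.
Qed.

(* A point [z] outside [S] is separated from [S] by the pair of elements
   representing [up z] and [up z \ {z}], which agree on [S]. *)
Lemma semi_primal_minimal : semi_primal fA ->
  forall S : set X, substructure fX S -> S <> set0 -> S = setT.
Proof.
move=> /semi_primalP sp S [_ S_op] /eqP/set0P[x0 Sx0].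
case: (sp _ (agree_on_subalg2 S_op)) => [[/agree_onP/(_ x0 Sx0) /= ] | diag].
  by case: (D_space_lat_hom x0) => -> ->.
apply/seteqP; split => // z _; apply: contrapT => nSz.
have [a1 a1E] := D_up_set_represented (leX z)
  (fun u v (zu : leX z u) uv a za => uv a (zu a za)).
have [a2 a2E] : exists a, forall y : X, sval y a <-> leX z y /\ y <> z.
  apply: D_up_set_represented => u v [zu nuz] uv; split=> [a za | vz].
    exact/uv/zu.
  by subst v; apply: nuz; exact: D_le_anti.
have a12 : (a1, a2) \in agree_on S.
  apply/agree_onP => x Sx /=; have nxz : x <> z by move=> exz; subst x.
  by apply/idP/idP => [/a1E zx | /a2E[zx _]]; [apply/a2E | apply/a1E].
have /= a12E := diag _ a12.
have /a1E : leX z z by [].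
by rewrite a12E => /a2E[].
Qed.

Section Pullback.
Variables (Y : topologicalType) (leY : Y -> Y -> Prop) (fY : F -> Y -> Y).
Hypothesis cY : cornish_space sgn leY fY.

Definition clopen_up (U : set Y) : Prop := [/\ open U, closed U & up_set leY U].

Definition pulls_back (phi : X -> Y) (U : set Y) (a : A) : Prop :=
  forall x : X, sval x a <-> U (phi x).

Lemma clopen_upI U V : clopen_up U -> clopen_up V -> clopen_up (U `&` V).
Proof.
move=> [oU cU uU] [oV cV uV]; split; [exact: openI | exact: closedI |].
by move=> u v [Uu Vu] uv; split; [exact: uU uv | exact: uV uv].
Qed.

Lemma clopen_upU U V : clopen_up U -> clopen_up V -> clopen_up (U `|` V).
Proof.
move=> [oU cU uU] [oV cV uV]; split; [exact: openU | exact: closedU |].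
by move=> u v [Uu | Vu] uv; [left; exact: uU uv | right; exact: uV uv].
Qed.

Definition op_pullback f (U : set Y) : set Y :=
  if sgn f then fY f @^-1` U else ~` (fY f @^-1` U).

Lemma clopen_up_op f U : clopen_up U -> clopen_up (op_pullback f U).
Proof.
case: cY => _ /(_ f)[fY_cont fY_mono] [oU cU uU].
have ofU : open (fY f @^-1` U) by move/continuousP: fY_cont; apply.
have cfU : closed (fY f @^-1` U) by apply: preimage_closed => // y _; exact: fY_cont.
rewrite /op_pullback; case: (sgn f) fY_mono => fY_mono.
  by split=> // u v Uu uv; exact: uU (fY_mono _ _ uv).
split; [by rewrite openC | by rewrite closedC |].
by move=> u v nUu uv Uv; apply: nUu; exact: uU (fY_mono _ _ uv).
Qed.

Section SingleMorphism.
Variable phi : X -> Y.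
Hypothesis phi_op : forall f u, phi (fX f u) = fY f (phi u).

Lemma pulls_backI U V a b :
  pulls_back phi U a -> pulls_back phi V b -> pulls_back phi (U `&` V) (Order.meet a b).
Proof.
move=> Ua Vb x; case: (D_space_lat_hom x) => _ _ -> _.
by split => [/andP[/Ua ? /Vb ?] | [/Ua -> /Vb ->]].
Qed.

Lemma pulls_backU U V a b :
  pulls_back phi U a -> pulls_back phi V b -> pulls_back phi (U `|` V) (Order.join a b).
Proof.
move=> Ua Vb x; case: (D_space_lat_hom x) => _ _ _ ->.
by split=> [/orP[/Ua | /Vb] | [/Ua | /Vb] ->]; rewrite ?orbT; [left | right | |].
Qed.

Lemma pulls_back_op f U a :
  pulls_back phi U a -> pulls_back phi (op_pullback f U) (fA f a).
Proof.
move=> Ua x; have := Ua (fX f x); rewrite D_opE phi_op /op_pullback.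
case: (sgn f) => // xfU.
by split=> [xa /xfU | nU]; [rewrite xa | apply/negPn/negP => /xfU].
Qed.

End SingleMorphism.

Variables phi1 phi2 : X -> Y.
Hypotheses (m1 : cornish_morphism leX fX leY fY phi1)
  (m2 : cornish_morphism leX fX leY fY phi2).

Definition pullback_pairs : {set A * A} :=
  [set p | `[< exists2 U, clopen_up U & pulls_back phi1 U p.1 /\ pulls_back phi2 U p.2 >]]%SET.

Lemma pullback_pairsP p : reflect
  (exists2 U, clopen_up U & pulls_back phi1 U p.1 /\ pulls_back phi2 U p.2)
  (p \in pullback_pairs).
Proof. by rewrite inE; apply: asboolP. Qed.

Lemma pullback_pairs_subalg2 : is_subalg2 fA pullback_pairs.
Proof.
case: m1 => _ _ op1; case: m2 => _ _ op2.
have pulls_back_top phi : pulls_back phi setT Order.top.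
  by move=> x; case: (D_space_lat_hom x) => ->.
have pulls_back_bot phi : pulls_back phi set0 Order.bottom.
  by move=> x; case: (D_space_lat_hom x) => _ ->.
split.
- apply/pullback_pairsP; exists setT => //.
  by split; [exact: openT | exact: closedT |].
- apply/pullback_pairsP; exists set0 => //.
  by split; [exact: open0 | exact: closed0 | move=> ? ? []].
- move=> p q /pullback_pairsP[U cU [U1 U2]] /pullback_pairsP[V cV [V1 V2]].
  apply/pullback_pairsP; exists (U `&` V); first exact: clopen_upI.
  by split; exact: pulls_backI.
- move=> p q /pullback_pairsP[U cU [U1 U2]] /pullback_pairsP[V cV [V1 V2]].
  apply/pullback_pairsP; exists (U `|` V); first exact: clopen_upU.
  by split; exact: pulls_backU.
- move=> f p /pullback_pairsP[U cU [U1 U2]].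
  apply/pullback_pairsP; exists (op_pullback f U); first exact: clopen_up_op.
  by split; exact: pulls_back_op.
Qed.

(* [(1, 0)] and [(0, 1)] yield clopen up-sets containing the image of one
   morphism and missing the image of the other. *)
Lemma pullback_corners_disjoint : jointly_surjective phi1 phi2 ->
  (Order.top, Order.bottom) \in pullback_pairs ->
  (Order.bottom, Order.top) \in pullback_pairs ->
  order_disjoint_union leY (phi1 @` setT) (phi2 @` setT).
Proof.
move=> js /pullback_pairsP[U [_ _ U_up] [U1 U2]] /pullback_pairsP[V [_ _ V_up] [V1 V2]].
have U_phi1 x : U (phi1 x) by apply/U1; case: (D_space_lat_hom x) => ->.
have nU_phi2 x : ~ U (phi2 x) by move/U2; case: (D_space_lat_hom x) => _ ->.
have V_phi2 x : V (phi2 x) by apply/V2; case: (D_space_lat_hom x) => ->.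
have nV_phi1 x : ~ V (phi1 x) by move/V1; case: (D_space_lat_hom x) => _ ->.
split=> //.
  by apply/seteqP; split => // y [[x _ <-] [x' _ e]]; apply: (nU_phi2 x'); rewrite e.
move=> _ _ [x _ <-] [x' _ <-]; split=> le.
  by apply: (nU_phi2 x'); exact: U_up (U_phi1 x) le.
by apply: (nV_phi1 x); exact: V_up (V_phi2 x') le.
Qed.

(* On the diagonal, no clopen up-set separates [phi1 x] from [phi2 x]. *)
Lemma pullback_diag_eq : {in pullback_pairs, forall p, p.1 = p.2} -> phi1 = phi2.
Proof.
move=> diag; case: m1 => _ mono1 _; case: m2 => _ mono2 _.
have same_side U x : clopen_up U -> U (phi1 x) <-> U (phi2 x).
  move=> cU; have [_ _ U_up] := cU.
  have [a1 a1E] := D_up_set_represented (fun z => U (phi1 z))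
    (fun u v Uu uv => U_up _ _ Uu (mono1 _ _ uv)).
  have [a2 a2E] := D_up_set_represented (fun z => U (phi2 z))
    (fun u v Uu uv => U_up _ _ Uu (mono2 _ _ uv)).
  have /diag /= a12 : (a1, a2) \in pullback_pairs by apply/pullback_pairsP; exists U.
  by rewrite -a1E -a2E a12.
case: cY => -[[_ _ antiY] _ sepY] _; apply: funext => x.
by apply: antiY; apply: contrapT => /sepY[U [oU cU U_up Ux nUy]]; apply/nUy/(same_side U x).
Qed.

End Pullback.
Arguments pullback_pairs_subalg2 {Y leY fY} cY {phi1 phi2}.
Arguments pullback_corners_disjoint {Y leY phi1 phi2}.
Arguments pullback_diag_eq {Y leY fY} cY {phi1 phi2}.

Lemma semi_primal_disjoint_or_eq : semi_primal fA ->
  forall (Y : topologicalType) (leY : Y -> Y -> Prop) (fY : F -> Y -> Y),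
    cornish_space sgn leY fY ->
    forall phi1 phi2 : X -> Y,
      cornish_morphism leX fX leY fY phi1 ->
      cornish_morphism leX fX leY fY phi2 ->
      jointly_surjective phi1 phi2 ->
      order_disjoint_union leY (phi1 @` setT) (phi2 @` setT) \/ phi1 = phi2.
Proof.
move=> /semi_primalP sp Y leY fY cY phi1 phi2 m1 m2 js.
case: (sp _ (pullback_pairs_subalg2 cY m1 m2)) => [[S10 S01] | diag].
  by left; exact: (pullback_corners_disjoint js S10 S01).
by right; exact: (pullback_diag_eq cY m1 m2 diag).
Qed.

Lemma equalizer_substructure {Y : topologicalType} {leY : Y -> Y -> Prop}
    {fY : F -> Y -> Y} {phi1 phi2 : X -> Y} :
  cornish_morphism leX fX leY fY phi1 -> cornish_morphism leX fX leY fY phi2 ->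
  substructure fX [set z | phi1 z = phi2 z].
Proof.
move=> [_ _ op1] [_ _ op2]; split=> [|f x /= ex]; first exact: D_space_closed.
by rewrite op1 op2 ex.
Qed.

Section PairSpace.
Variable S : {set A * A}.
Hypothesis HS : is_subalg2 fA S.

Local Notation meet2 := (fun p q : A * A => (Order.meet p.1 q.1, Order.meet p.2 q.2)).
Local Notation join2 := (fun p q : A * A => (Order.join p.1 q.1, Order.join p.2 q.2)).

Definition pair_point (b : bool) (x : X) : {ffun A * A -> bool} :=
  [ffun p => (p \in S) && sval x (if b then p.1 else p.2)].

Definition is_pair_point (g : {ffun A * A -> bool}) : bool :=
  `[< exists b x, g = pair_point b x >].

Definition pair_space : topologicalType :=
  discrete_topology {g : {ffun A * A -> bool} | is_pair_point g}.

Definition pair_le (u v : pair_space) : Prop := forall p, sval u p -> sval v p.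

Definition pair_op_fun (f : F) (g : {ffun A * A -> bool}) : {ffun A * A -> bool} :=
  [ffun p => (p \in S) &&
     (if sgn f then g (fA f p.1, fA f p.2) else ~~ g (fA f p.1, fA f p.2))].

Lemma pair_op_fun_point f b x : pair_op_fun f (pair_point b x) = pair_point b (fX f x).
Proof.
case: HS => _ _ _ _ S_op; apply/ffunP => p; rewrite !ffunE D_opE.
by case: (boolP (p \in S)) => //= /(S_op f) ->; case: b.
Qed.

Lemma is_pair_point_op f (u : pair_space) : is_pair_point (pair_op_fun f (sval u)).
Proof.
case: u => g /= /asboolP[b [x ->]]; apply/asboolP; exists b, (fX f x).
exact: pair_op_fun_point.
Qed.

Definition pair_op (f : F) (u : pair_space) : pair_space :=
  exist _ (pair_op_fun f (sval u)) (is_pair_point_op f u).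

Lemma is_pair_point_point b x : is_pair_point (pair_point b x).
Proof. by apply/asboolP; exists b, x. Qed.

Definition pair_embed (b : bool) (x : X) : pair_space :=
  exist _ (pair_point b x) (is_pair_point_point b x).

Lemma pair_space_cornish : cornish_space sgn pair_le pair_op.
Proof.
split.
  split.
  - split=> [u p // | u v w uv vw p /uv /vw // | u v uv vu].
    by apply/val_inj/ffunP => p; apply/idP/idP; [exact: uv | exact: vu].
  - exact/finite_compact/finite_finset.
  - move=> u v nuv; exists (pair_le u); split=> //.
    + exact: discrete_open.
    + exact: discrete_closed.
    + by move=> w1 w2 uw1 w12 p /uw1 /w12.
move=> f; split; first by apply/continuousP => U _; exact: discrete_open.
case sf: (sgn f) => u v uv p /=; rewrite !ffunE sf; case: (p \in S) => //=.
  exact: uv.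
by apply: contra => /uv.
Qed.

Lemma pair_embed_morphism b : cornish_morphism leX fX pair_le pair_op (pair_embed b).
Proof.
split; first exact: D_space_continuous.
  by move=> u v uv p /=; rewrite !ffunE => /andP[-> /uv].
by move=> f x; apply: val_inj; rewrite /= pair_op_fun_point.
Qed.

Lemma pair_embed_jointly_surjective : jointly_surjective (pair_embed true) (pair_embed false).
Proof.
apply/seteqP; split => // -[g g_pt] _; have /asboolP[b [x e]] := g_pt.
have -> : exist _ g g_pt = pair_embed b x :> pair_space by exact: val_inj.
by case: b {e}; [left | right]; exists x.
Qed.

Lemma pair_embed_eq_diag : pair_embed true = pair_embed false ->
  {in S, forall p : A * A, p.1 = p.2}.
Proof.
move=> e p Sp; apply: D_space_separates => x.
by have := congr1 (fun phi : X -> pair_space => sval (phi x) p) e; rewrite /= !ffunE Sp.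
Qed.

Lemma pair_point_hom_on b x :
  hom_on meet2 join2 (Order.top, Order.top) (Order.bottom, Order.bottom) (mem S)
    (pair_point b x).
Proof.
case: HS (D_space_lat_hom x) => S_top S_bot S_meet S_join _ [xT xB xM xJ].
split=> [||s t Ss St|s t Ss St]; rewrite !ffunE.
- by rewrite S_top; case: b.
- by rewrite S_bot; case: b; rewrite /= xB.
- by rewrite S_meet // (Ss : s \in S) (St : t \in S); case: b; rewrite /= xM.
- by rewrite S_join // (Ss : s \in S) (St : t \in S); case: b; rewrite /= xJ.
Qed.

(* The image of [pair_embed b] is an up-set when the two images are
   order-disjoint, so it is represented by an element [s] of [S]. *)
Lemma pair_embed_corner (b : bool) :
  order_disjoint_union pair_le (pair_embed true @` setT) (pair_embed false @` setT) ->
  exists2 s, s \in S &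
    forall x : X, sval x (if b then s.1 else s.2) && ~~ sval x (if b then s.2 else s.1).
Proof.
case=> disj _ incomp; case: (HS) => S_top S_bot S_meet S_join _.
have embed_neq x x' : pair_embed true x <> pair_embed false x'.
  move=> e; have : (pair_embed true @` setT `&` pair_embed false @` setT) (pair_embed true x).
    by split; [exists x | exists x'].
  by rewrite disj.
have [||s Ss sE] := @hom_on_up_set_represented (A * A)%type meet2 join2 _ _ (mem S)
  S_top S_bot S_meet S_join pair_space (fun u => sval u) (pair_embed b @` setT).
- by move=> -[g /= /asboolP[b' [x ->]]]; exact: pair_point_hom_on.
- move=> _ [g g_pt] [x _ <-] le_xg; have /asboolP[b' [x' eg]] := g_pt.
  have le : pair_le (pair_embed b x) (exist _ g g_pt).
    move=> p /=; rewrite ffunE; case: (boolP (p \in S)) => //= Sp xp.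
    by apply: le_xg => //; rewrite ffunE Sp.
  have e : exist _ g g_pt = pair_embed b' x' :> pair_space by exact: val_inj.
  rewrite e in le *; clear e le_xg g_pt eg.
  case: b b' le => -[] le; try by exists x'.
    by case: (incomp _ _ (ex_intro2 _ _ x I erefl) (ex_intro2 _ _ x' I erefl)).
  by case: (incomp _ _ (ex_intro2 _ _ x' I erefl) (ex_intro2 _ _ x I erefl)).
exists s => // x; apply/andP; split.
  have /sE /= : (pair_embed b @` setT) (pair_embed b x) by exists x.
  by rewrite ffunE => /andP[].
apply/negP => xs; have /sE[x' _] : sval (pair_embed (~~ b) x) s.
  by rewrite /= ffunE (Ss : s \in S); case: (b) xs.
by case: b {xs sE} => e; [apply: (embed_neq x' x) | apply: (embed_neq x x')].
Qed.

Lemma pair_embed_disjoint_corners :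
  order_disjoint_union pair_le (pair_embed true @` setT) (pair_embed false @` setT) ->
  (Order.top, Order.bottom) \in S /\ (Order.bottom, Order.top) \in S.
Proof.
move=> disj; have [[a1 c1] S1 /= s1E] := pair_embed_corner true disj.
have [[a2 c2] S2 /= s2E] := pair_embed_corner false disj.
split.
  by congr (_ \in S): S1; congr pair;
    [apply: D_space_top | apply: D_space_bot] => x; case/andP: (s1E x).
by congr (_ \in S): S2; congr pair;
  [apply: D_space_bot | apply: D_space_top] => x; case/andP: (s2E x).
Qed.

End PairSpace.
Arguments pair_space_cornish {S}.

Lemma disjoint_or_eq_semi_primal :
  (forall (Y : topologicalType) (leY : Y -> Y -> Prop) (fY : F -> Y -> Y),
      cornish_space sgn leY fY ->
      forall phi1 phi2 : X -> Y,
        cornish_morphism leX fX leY fY phi1 ->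
        cornish_morphism leX fX leY fY phi2 ->
        jointly_surjective phi1 phi2 ->
        order_disjoint_union leY (phi1 @` setT) (phi2 @` setT) \/ phi1 = phi2) ->
  semi_primal fA.
Proof.
move=> dichotomy; apply/semi_primalP => S HS.
have [disj | e] := dichotomy _ _ _ (pair_space_cornish HS) _ _ (pair_embed_morphism S HS true)
  (pair_embed_morphism S HS false) (pair_embed_jointly_surjective S).
  by left; exact: pair_embed_disjoint_corners.
by right; exact: pair_embed_eq_diag.
Qed.

Lemma semi_primal_comparable_eq : semi_primal fA ->
  forall (Y : topologicalType) (leY : Y -> Y -> Prop) (fY : F -> Y -> Y),
    cornish_space sgn leY fY ->
    forall phi1 phi2 : X -> Y,
      cornish_morphism leX fX leY fY phi1 ->
      cornish_morphism leX fX leY fY phi2 ->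
      jointly_surjective phi1 phi2 ->
      (exists a b : X, order_comparable leY (phi1 a) (phi2 b)) ->
      exists c : X, phi1 c = phi2 c.
Proof.
move=> sp Y leY fY cY phi1 phi2 m1 m2 js [a [b ab]].
case: (semi_primal_disjoint_or_eq sp _ _ _ cY _ _ m1 m2 js) => [[_ _ incomp] | ->].
  by have [] := incomp _ _ (ex_intro2 _ _ a I erefl) (ex_intro2 _ _ b I erefl); case: ab.
by exists a.
Qed.

(* The equalizer of the two embeddings is a substructure, so it is empty or
   everything; if it is empty, the images are order-disjoint. *)
Lemma minimal_comparable_eq_semi_primal :
  (forall S : set X, substructure fX S -> S <> set0 -> S = setT) ->
  (forall (Y : topologicalType) (leY : Y -> Y -> Prop) (fY : F -> Y -> Y),
    cornish_space sgn leY fY ->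
    forall phi1 phi2 : X -> Y,
      cornish_morphism leX fX leY fY phi1 ->
      cornish_morphism leX fX leY fY phi2 ->
      jointly_surjective phi1 phi2 ->
      (exists a b : X, order_comparable leY (phi1 a) (phi2 b)) ->
      exists c : X, phi1 c = phi2 c) ->
  semi_primal fA.
Proof.
move=> minimal comparable_eq; apply/semi_primalP => S HS.
have cY := pair_space_cornish HS; have [[le_refl _ _] _ _] := cY.1.
have [m1 m2] := (pair_embed_morphism S HS true, pair_embed_morphism S HS false).
have js := pair_embed_jointly_surjective S.
case: (pselect (exists a b : X,
  order_comparable (pair_le S) (pair_embed S true a) (pair_embed S false b))) => [ab | nab].
  right; apply: pair_embed_eq_diag; apply: funext => z.
  have [c ec] := comparable_eq _ _ _ cY _ _ m1 m2 js ab.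
  have /seteqP[_ all_eq] : [set z | pair_embed S true z = pair_embed S false z] = setT.
    by apply: minimal _ (equalizer_substructure m1 m2) _; apply/eqP/set0P; exists c.
  exact: all_eq.
by left; apply: (pair_embed_disjoint_corners _ HS); exact: incomparable_order_disjoint_union.
Qed.

End CornishDuality.

Theorem theorem5p9 (d : Order.disp_t) (A : finTBDistrLatticeType d)
  (F : Type) (sgn : F -> bool) (fA : F -> A -> A) (HA : cornish_alg sgn fA) :
  let X := D_space A in
  let leX := @D_le d A in
  let fX := D_op HA in
  (semi_primal fA <->
   (forall (Y : topologicalType) (leY : Y -> Y -> Prop) (fY : F -> Y -> Y),
      cornish_space sgn leY fY ->
      forall phi1 phi2 : X -> Y,
        cornish_morphism leX fX leY fY phi1 ->
        cornish_morphism leX fX leY fY phi2 ->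
        jointly_surjective phi1 phi2 ->
        order_disjoint_union leY (phi1 @` setT) (phi2 @` setT) \/ phi1 = phi2))
  /\
  (semi_primal fA <->
   ((forall S : set X, substructure fX S -> S <> set0 -> S = setT) /\
    (forall (Y : topologicalType) (leY : Y -> Y -> Prop) (fY : F -> Y -> Y),
      cornish_space sgn leY fY ->
      forall phi1 phi2 : X -> Y,
        cornish_morphism leX fX leY fY phi1 ->
        cornish_morphism leX fX leY fY phi2 ->
        jointly_surjective phi1 phi2 ->
        (exists a b : X, order_comparable leY (phi1 a) (phi2 b)) ->
        exists c : X, phi1 c = phi2 c))).
Proof.
move=> X leX fX; split; split.
- exact: semi_primal_disjoint_or_eq.
- exact: disjoint_or_eq_semi_primal.
- move=> sp; split; [exact: semi_primal_minimal | exact: semi_primal_comparable_eq].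
- by case; exact: minimal_comparable_eq_semi_primal.
Qed.
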